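(* Let $n\ge 1$ and let $\pi$ be a uniformly random permutation of $[n]=\{1,\dots,n\}$. For $1\le i\le n$, let the reduction of $\pi$ to $[i]$ be the permutation $\sigma$ of $[i]$ defined by: for $j\in[i]$, $\sigma(j)=\pi^{m}(j)$, where $m\ge 1$ is the least positive integer with $\pi^{m}(j)\in[i]$ (equivalently, $\sigma$ is obtained by deleting the elements $i+1,\dots,n$ from the cycle notation of $\pi$). Let $X$ be the largest $i\in\{1,\dots,n\}$ such that the reduction of $\pi$ to $[i]$ is unicyclic (consists of a single cycle). Then \[\mathbb P(X=i)=\frac{1}{i}-\frac{1}{i+1}=\frac{1}{i(i+1)}\quad (1\le i\le n-1),\qquad \mathbb P(X=n)=\frac1n.\]
   Context: A permutation is unicyclic if its cycle decomposition consists of exactly one cycle. The reduction to $[1]$ is the identity on $\{1\}$, which counts as unicyclic. *)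

From HB Require Import structures.
From mathcomp Require Import all_boot all_order all_algebra all_fingroup.
Set Implicit Arguments. Unset Strict Implicit. Unset Printing Implicit Defensive.

(* [n] = {1,...,n} is represented by 'I_n = {0,...,n-1} (k <-> k+1);
   [i] = {1..i} is then the set of ordinals/naturals with value < i. *)

Definition pstep n (p : {perm 'I_n}) (x : nat) : nat :=
  if insub x is Some o then val (p o) else x.

(* least m >= 1 such that pi^m(j) lies in [i]  (it is always <= n) *)
Definition first_return n (p : {perm 'I_n}) (i j : nat) : nat :=
  (find (fun k => iter k.+1 (pstep p) j < i) (iota 0 n)).+1.

Definition reduction n (p : {perm 'I_n}) (i j : nat) : nat :=
  iter (first_return p i j) (pstep p) j.

Definition unicyclic_reduction n (p : {perm 'I_n}) (i : nat) : bool :=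
  [exists s : {perm 'I_i},
     [forall j : 'I_i, val (s j) == reduction p i j] && (#|porbits s| == 1)].

Definition Xstat n (p : {perm 'I_n}) : nat :=
  \max_(1 <= i < n.+1 | unicyclic_reduction p i) i.

Definition probX n (i : nat) : rat :=
  (#|[set p : {perm 'I_n} | Xstat p == i]|%:R / #|{perm 'I_n}|%:R)%R.

From HB Require Import structures.
From mathcomp Require Import all_boot all_order all_algebra all_fingroup.
From mathcomp Require Import zify ring.
Set Implicit Arguments. Unset Strict Implicit. Unset Printing Implicit Defensive.

(* Deleting points from the cycle notation of pi neither merges nor splits the
   cycles on the remaining points, so the reduction of pi to [i] is unicyclic
   iff 1, ..., i lie in one cycle of pi; in particular X >= i iff they do.
   Inserting n+1 into the cycle notation of a permutation of [n], just before
   one of the n+1 possible points (before itself meaning a new fixed point), is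
   a bijection S_n x [n+1] -> S_(n+1) that keeps the cycles on [n]; and
   1, ..., n+1 lie in one cycle iff 1, ..., n did and n+1 is not fixed.
   Induction on n then shows that 1, ..., i lie in one cycle for exactly n!/i
   permutations, i.e. P(X >= i) = 1/i. *)

Lemma porbit_trans (T : finType) (s : {perm T}) x y z :
  y \in porbit s x -> z \in porbit s y -> z \in porbit s x.
Proof. by rewrite -!eq_porbit_mem => /eqP -> /eqP ->. Qed.

Lemma porbit_perm1 (T : finType) (s : {perm T}) x : porbit s (s x) = porbit s x.
Proof. by have := porbit_perm s 1 x; rewrite expg1. Qed.

(* [r] is the map induced by [p] on the image of [e]: [ret u] is the time of
   the first return of [e u] to that image. *)
Section FirstReturn.
Variables (T U : finType) (p : {perm T}) (e : U -> T).
Variables (r : U -> U) (ret : U -> nat).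
Hypothesis e_inj : injective e.
Hypothesis ret_gt0 : forall u, 0 < ret u.
Hypothesis ret_hit : forall u, (p ^+ ret u)%g (e u) = e (r u).
Hypothesis ret_min : forall u l, 0 < l < ret u -> (p ^+ l)%g (e u) \notin codom e.

Lemma first_return_inj : injective r.
Proof.
move=> u1 u2; wlog le12 : u1 u2 / ret u1 <= ret u2.
  by move=> W Er; case: (leqP (ret u1) (ret u2)) => [|/ltnW] le; [|apply/esym]; apply: W.
move=> Er; set d := ret u2 - ret u1.
have E : e u1 = (p ^+ d)%g (e u2).
  apply: (@perm_inj _ (p ^+ ret u1)%g).
  by rewrite ret_hit Er -ret_hit -permM -expgD subnK.
have [d0 | d_gt0] := posnP d; first by apply: e_inj; rewrite E d0 expg0 perm1.
have lt_d : 0 < d < ret u2 by rewrite d_gt0 /d ltn_subrL !ret_gt0.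
by move: (ret_min lt_d); rewrite -E codom_f.
Qed.

Variable s : {perm U}.
Hypothesis sE : s =1 r.

Lemma porbit_first_return u v : (v \in porbit s u) = (e v \in porbit p (e u)).
Proof.
apply/idP/idP.
  case/porbitP=> k ->; elim: k => [|k IH]; first by rewrite expg0 perm1 porbit_id.
  apply: porbit_trans IH _; rewrite expgSr permM sE -ret_hit; exact: mem_porbit.
case/porbitP=> k; elim: k {-2}k (leqnn k) u => [|K IH] k le_kK u.
  by rewrite leqn0 in le_kK; rewrite (eqP le_kK) expg0 perm1 => /e_inj ->; exact: porbit_id.
move=> Ev; have [k0 | k_gt0] := posnP k.
  by move: Ev; rewrite k0 expg0 perm1 => /e_inj ->; exact: porbit_id.
have le_ret : ret u <= k.
  rewrite leqNgt; apply/negP => lt_k.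
  by have := @ret_min u k; rewrite k_gt0 lt_k -Ev codom_f => /(_ isT).
have Ek : (p ^+ k)%g (e u) = (p ^+ (k - ret u))%g (e (r u)).
  by rewrite -ret_hit -permM -expgD addnC subnK.
rewrite -porbit_perm1 sE; apply: IH; last by rewrite Ev Ek.
by have := ret_gt0 u; lia.
Qed.
End FirstReturn.

Definition cycle_below n (p : {perm 'I_n}) (i : nat) : bool :=
  [forall x : 'I_n, forall y : 'I_n, (x < i) ==> (y < i) ==> (y \in porbit p x)].

Lemma cycle_below_mono n (p : {perm 'I_n}) i j :
  j <= i -> cycle_below p i -> cycle_below p j.
Proof.
move=> le_ji /forallP cyc_i; apply/forallP=> x; apply/forallP=> y.
apply/implyP=> lt_x; apply/implyP=> lt_y.
by have /forallP/(_ y) := cyc_i x; rewrite (leq_trans lt_x) ?(leq_trans lt_y).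
Qed.

Section InsertLast.
Variable n : nat.
Local Notation m := (@ord_max n).

(* Inserts [n] just before [x.2] in the cycle notation of [x.1]; [x.2 = n]
   makes it a fixed point. *)
Definition insert_last (x : {perm 'I_n} * 'I_n.+1) : {perm 'I_n.+1} :=
  (lift_perm m m x.1 * tperm x.2 m)%g.

Lemma insert_last_max t a : insert_last (t, a) m = a.
Proof. by rewrite permM lift_perm_id tpermR. Qed.

Lemma insert_last_lift t a x :
  insert_last (t, a) (lift m x) = tperm a m (lift m (t x)).
Proof. by rewrite permM lift_perm_lift. Qed.

Lemma insert_last_inj : injective insert_last.
Proof.
move=> [t a] [t' a'] E.
have Ea : a = a' by rewrite -(insert_last_max t a) E insert_last_max.
subst a'; congr pair; apply/permP=> x; apply: (@lift_inj _ m).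
by apply: (@perm_inj _ (tperm a m)); rewrite -!insert_last_lift E.
Qed.

Lemma insert_last_bij : bijective insert_last.
Proof.
apply: inj_card_bij insert_last_inj _.
by rewrite card_prod !card_Sn card_ord factS mulnC.
Qed.

Lemma max_notin_codom_lift : m \notin codom (lift m).
Proof. by apply/codomP => -[x /eqP]; rewrite eq_liftF. Qed.

Lemma porbit_insert_last t a (x y : 'I_n) :
  (lift m y \in porbit (insert_last (t, a)) (lift m x)) = (y \in porbit t x).
Proof.
pose ret z := if lift m (t z) == a then 2 else 1.
have ret_gt0 z : 0 < ret z by rewrite /ret; case: ifP.
have ret_hit z : (insert_last (t, a) ^+ ret z)%g (lift m z) = lift m (t z).
  rewrite /ret; case: eqP => [Ea | /eqP Na].
    by rewrite expgSr permM expg1 insert_last_lift Ea tpermL insert_last_max.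
  by rewrite expg1 insert_last_lift tpermD // ?neq_lift // eq_sym.
have ret_min z l : 0 < l < ret z ->
    (insert_last (t, a) ^+ l)%g (lift m z) \notin codom (lift m).
  rewrite /ret; case: ifP => [/eqP Ea | _]; last by case: l => [|[]].
  case: l => [|[|]] //= _; rewrite expg1 insert_last_lift Ea tpermL.
  exact: max_notin_codom_lift.
by rewrite (porbit_first_return (@lift_inj _ m) ret_gt0 ret_hit ret_min (frefl t)).
Qed.

Lemma lt_max_lift (x : 'I_n.+1) : x < n -> exists x' : 'I_n, x = lift m x'.
Proof.
by case: (unliftP m x) => [x' -> | ->]; [exists x' | rewrite ltnn].
Qed.

Lemma cycle_below_insert_last t a i :
  i <= n -> cycle_below (insert_last (t, a)) i = cycle_below t i.
Proof.
move=> le_in; apply/forallP/forallP => cyc x; apply/forallP => y.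
  by have /forallP/(_ (lift m y)) := cyc (lift m x); rewrite !lift_max porbit_insert_last.
apply/implyP=> lt_x; apply/implyP => lt_y.
have [x' Ex] := lt_max_lift (leq_trans lt_x le_in).
have [y' Ey] := lt_max_lift (leq_trans lt_y le_in).
subst x y; rewrite !lift_max in lt_x lt_y; rewrite porbit_insert_last.
by have /forallP/(_ y') := cyc x'; rewrite lt_x lt_y.
Qed.

Lemma cycle_below_insert_last_top t a : 0 < n ->
  cycle_below (insert_last (t, a)) n.+1 = cycle_below t n && (a != m).
Proof.
move=> n_gt0; set g := insert_last (t, a); set c := lift m (Ordinal n_gt0).
have gm : g m = a by exact: insert_last_max.
apply/idP/andP => [cyc | [cyc a_neq_m]].
  split; first by rewrite -(cycle_below_insert_last t a (leqnn n)) (cycle_below_mono _ cyc).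
  apply/eqP => a_eq_m; move/forallP: cyc => /(_ c) /forallP /(_ m).
  rewrite lift_max /= ltnSn porbit_sym => /porbitP[k].
  by rewrite permX_fix ?gm // => /eqP; rewrite lift_eqF.
have lift_in_c z : lift m z \in porbit g c.
  rewrite porbit_insert_last.
  by move/forallP: cyc => /(_ (Ordinal n_gt0)) /forallP /(_ z); rewrite /= n_gt0 ltn_ord.
have all_in_c z : z \in porbit g c.
  case: (unliftP m z) => [z' -> | ->]; first exact: lift_in_c.
  case: (unliftP m a) a_neq_m => [a' Ea _ | ->]; last by rewrite eqxx.
  apply: porbit_trans (lift_in_c a') _.
  by rewrite -Ea porbit_sym -{1}gm -porbit_perm1 porbit_id.
apply/forallP => x; apply/forallP => y; apply/implyP => _; apply/implyP => _.
by apply: porbit_trans (all_in_c y); rewrite porbit_sym.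
Qed.

End InsertLast.

Definition ncycle_below n i := #|[set p : {perm 'I_n} | cycle_below p i]|.

Lemma card_preim_insert_last n (Q : pred {perm 'I_n.+1}) :
  #|[set p | Q p]| = #|[set x | Q (@insert_last n x)]|.
Proof.
rewrite -(on_card_preimset (onW_bij _ (@insert_last_bij n))).
by apply: eq_card => x; rewrite !inE.
Qed.

Lemma ncycle_below_lift n i : i <= n -> ncycle_below n.+1 i = ncycle_below n i * n.+1.
Proof.
move=> le_in; rewrite /ncycle_below card_preim_insert_last.
have -> : [set x | cycle_below (@insert_last n x) i] = setX [set t | cycle_below t i] setT.
  by apply/setP => -[t a]; rewrite !inE cycle_below_insert_last ?andbT.
by rewrite cardsX cardsT card_ord.
Qed.

Lemma ncycle_below_top n : 0 < n -> ncycle_below n.+1 n.+1 = ncycle_below n n * n.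
Proof.
move=> n_gt0; rewrite /ncycle_below card_preim_insert_last.
have -> : [set x | cycle_below (@insert_last n x) n.+1] =
          setX [set t | cycle_below t n] [set~ ord_max].
  by apply/setP => -[t a]; rewrite !inE cycle_below_insert_last_top.
by rewrite cardsX cardsC1 card_ord.
Qed.

Lemma cycle_below1 n (p : {perm 'I_n}) : cycle_below p 1.
Proof.
apply/forallP => x; apply/forallP => y; apply/implyP; rewrite ltnS leqn0 => /eqP x0.
apply/implyP; rewrite ltnS leqn0 => /eqP y0.
suff -> : y = x by exact: porbit_id.
by apply/eqP; rewrite -val_eqE /= x0 y0.
Qed.

Lemma ncycle_belowE n i : 0 < i <= n -> ncycle_below n i * i = n`!.
Proof.
elim: n i => [|n IH] i /andP[i_gt0 le_in]; first by case: i i_gt0 le_in.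
have [-> | i_neq1] := eqVneq i 1.
  by rewrite muln1 /ncycle_below -card_Sn; apply: eq_card => p; rewrite inE cycle_below1.
have [Ei | i_neq] := eqVneq i n.+1.
  have n_gt0 : 0 < n by move: i_neq1; rewrite Ei; case: n {IH le_in Ei}.
  by rewrite Ei ncycle_below_top // IH ?n_gt0 ?leqnn // factS mulnC.
have le_i_n : i <= n by rewrite -ltnS ltn_neqAle i_neq le_in.
by rewrite ncycle_below_lift // mulnAC IH ?i_gt0 // factS mulnC.
Qed.

Lemma card_porbits_eq1 i (s : {perm 'I_i}) (j0 : 'I_i) :
  (#|porbits s| == 1) = [forall j1, forall j2, j2 \in porbit s j1].
Proof.
apply/idP/forallP => [/cards1P[X EX] j1 | one_orbit].
  have orbitE j : porbit s j = X by apply/set1P; rewrite -EX imset_f.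
  by apply/forallP => j2; rewrite orbitE -(orbitE j2) porbit_id.
apply/cards1P; exists (porbit s j0); apply/setP => X; rewrite inE.
apply/imsetP/eqP => [[x _ ->] | ->]; last by exists j0.
by apply/eqP; rewrite eq_porbit_mem; move/forallP: (one_orbit j0) => /(_ x).
Qed.

Lemma widen_ord_inj n m (le_nm : n <= m) : injective (widen_ord le_nm).
Proof. by move=> x y [/val_inj]. Qed.

Section Reduction.
Variables (n i : nat) (p : {perm 'I_n}).
Hypothesis le_in : i <= n.

Lemma iter_pstep (x : 'I_n) k : iter k (pstep p) x = (p ^+ k)%g x.
Proof.
elim: k => [|k IH]; first by rewrite expg0 perm1.
by rewrite iterS IH /pstep valK expgSr permM.
Qed.

Lemma first_return_min (j : 'I_n) l :
  0 < l < first_return p i j -> ~~ ((p ^+ l)%g j < i).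
Proof.
case: l => [//|l] /andP[_]; rewrite ltnS /first_return => lt_l.
have lt_ln : l < n.
  by apply: leq_trans lt_l _; rewrite -[X in _ <= X](size_iota 0 n) find_size.
by have := before_find 0 lt_l; rewrite nth_iota // add0n iter_pstep => ->.
Qed.

Lemma first_return_hit (j : 'I_n) : j < i -> (p ^+ first_return p i j)%g j < i.
Proof.
move=> lt_ji; set P := fun k => iter k.+1 (pstep p) j < i.
have has_P : has P (iota 0 n).
  apply/hasP; exists #|porbit p j|.-1.
    rewrite mem_iota add0n prednK ?lt0n ?card_porbit_neq0 //.
    by rewrite /= -[n in #|_| <= n]card_ord max_card.
  by rewrite /P prednK ?lt0n ?card_porbit_neq0 // iter_pstep permX iter_porbit.
have lt_find : find P (iota 0 n) < n by rewrite -[X in _ < X](size_iota 0 n) -has_find.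
by have := nth_find 0 has_P; rewrite nth_iota // add0n /P iter_pstep.
Qed.

Local Notation w := (widen_ord le_in).

Lemma codom_widen_ord (x : 'I_n) : (x \in codom w) = (x < i).
Proof.
apply/codomP/idP => [[y ->] | lt_xi]; first exact: (ltn_ord y).
by exists (Ordinal lt_xi); apply: val_inj.
Qed.

Lemma reduction_lt (j : 'I_i) : reduction p i j < i.
Proof. by rewrite /reduction (iter_pstep (w j)) (first_return_hit (j := w j) (ltn_ord j)). Qed.

Definition reduction_ord (j : 'I_i) : 'I_i := Ordinal (reduction_lt j).

Lemma reduction_ordE (j : 'I_i) : (p ^+ first_return p i j)%g (w j) = w (reduction_ord j).
Proof. by apply: val_inj; rewrite /= /reduction (iter_pstep (w j)). Qed.

Lemma reduction_skips (j : 'I_i) l :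
  0 < l < first_return p i j -> (p ^+ l)%g (w j) \notin codom w.
Proof. by rewrite codom_widen_ord; exact: (first_return_min (j := w j)). Qed.

Let ret_gt0 (j : 'I_i) : 0 < first_return p i j := erefl.

Lemma reduction_ord_inj : injective reduction_ord.
Proof.
exact: first_return_inj (@widen_ord_inj _ _ le_in) ret_gt0 reduction_ordE reduction_skips.
Qed.

Lemma porbit_reduction (s : {perm 'I_i}) : s =1 reduction_ord ->
  forall j1 j2, (j2 \in porbit s j1) = (w j2 \in porbit p (w j1)).
Proof.
exact: porbit_first_return (@widen_ord_inj _ _ le_in) ret_gt0 reduction_ordE reduction_skips s.
Qed.

Lemma cycle_below_widen :
  cycle_below p i = [forall j1 : 'I_i, forall j2 : 'I_i, w j2 \in porbit p (w j1)].
Proof.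
apply/forallP/forallP => cyc x; apply/forallP => y.
  by have /forallP/(_ (w y)) := cyc (w x); rewrite /= !ltn_ord.
apply/implyP => lt_x; apply/implyP => lt_y.
have -> : x = w (Ordinal lt_x) by apply: val_inj.
have -> : y = w (Ordinal lt_y) by apply: val_inj.
by move/forallP: (cyc (Ordinal lt_x)).
Qed.

Lemma unicyclic_reductionE : 0 < i -> unicyclic_reduction p i = cycle_below p i.
Proof.
move=> i_gt0; set j0 : 'I_i := Ordinal i_gt0.
rewrite cycle_below_widen; apply/existsP/idP => [[s /andP[/forallP sE]] | one_orbit].
  rewrite (card_porbits_eq1 _ j0) => /forallP one_orbit; apply/forallP => j1.
  apply/forallP => j2; rewrite -(porbit_reduction (s := s)) => [|j].
    by move/forallP: (one_orbit j1) => /(_ j2).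
  by apply/val_inj/eqP.
exists (perm reduction_ord_inj); rewrite (card_porbits_eq1 _ j0).
apply/andP; split; first by apply/forallP => j; rewrite permE.
apply/forallP => j1; apply/forallP => j2.
rewrite (porbit_reduction (permE _)).
by move/forallP: one_orbit => /(_ j1) /forallP /(_ j2).
Qed.
End Reduction.

Section LargestUnicyclicReduction.
Variables (n : nat) (p : {perm 'I_n}).

Lemma Xstat_le : Xstat p <= n.
Proof. by apply/bigmax_leqP_seq => k; rewrite mem_index_iota ltnS => /andP[]. Qed.

Lemma leq_Xstat i : 0 < i <= n -> (i <= Xstat p) = cycle_below p i.
Proof.
move=> /andP[i_gt0 le_in]; apply/idP/idP => [le_iX | cyc]; last first.
  apply: (leq_bigmax_seq i); first by rewrite mem_index_iota i_gt0 ltnS.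
  by rewrite unicyclic_reductionE.
apply: contraLR le_iX => not_cyc; rewrite -ltnNge -(prednK i_gt0) ltnS.
apply/bigmax_leqP_seq => k; rewrite mem_index_iota => /andP[k_gt0 lt_kn].
rewrite unicyclic_reductionE // => cyc; rewrite -ltnS prednK // ltnNge.
by apply: contra not_cyc => le_ik; apply: cycle_below_mono cyc.
Qed.

End LargestUnicyclicReduction.

Lemma cycle_below_subset n i j : j <= i ->
  [set p : {perm 'I_n} | cycle_below p i] \subset [set p | cycle_below p j].
Proof. by move=> le_ji; apply/subsetP => p; rewrite !inE; apply: cycle_below_mono. Qed.

Lemma card_Xstat_eq n i : 0 < i < n ->
  #|[set p : {perm 'I_n} | Xstat p == i]| = ncycle_below n i - ncycle_below n i.+1.
Proof.
move=> /andP[i_gt0 lt_in].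
rewrite /ncycle_below -(setIidPr (cycle_below_subset n (leqnSn i))) -cardsD.
apply: eq_card => p.
by rewrite !inE eqn_leq [Xstat p <= i]leqNgt !leq_Xstat ?i_gt0 ?(ltnW lt_in) // andbC.
Qed.

Lemma card_Xstat_eq_top n : 0 < n ->
  #|[set p : {perm 'I_n} | Xstat p == n]| = ncycle_below n n.
Proof.
move=> n_gt0; apply: eq_card => p.
by rewrite !inE eqn_leq Xstat_le leq_Xstat // n_gt0 /=.
Qed.

Import GRing.Theory Num.Theory.
Local Open Scope ring_scope.

Lemma ncycle_below_ratio n i : (0 < i <= n)%N ->
  (ncycle_below n i)%:R / #|{perm 'I_n}|%:R = i%:R^-1 :> rat.
Proof.
move=> hi; have c_gt0 : (0 < ncycle_below n i)%N.
  by have := fact_gt0 n; rewrite -(ncycle_belowE hi) muln_gt0 => /andP[].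
by rewrite card_Sn -(ncycle_belowE hi) natrM invfM mulrA mulfV ?mul1r ?pnatr_eq0 -?lt0n.
Qed.

Theorem mainTheorem1 (n : nat) (hn : (0 < n)%N) :
  (forall i : nat, (1 <= i < n)%N ->
     probX n i = i%:R^-1 - (i.+1)%:R^-1 /\
     probX n i = (i%:R * (i.+1)%:R)^-1) /\
  probX n n = n%:R^-1.
Proof.
split; last by rewrite /probX card_Xstat_eq_top // ncycle_below_ratio // hn /=.
move=> i /andP[i_gt0 lt_in].
have probX_i : probX n i = i%:R^-1 - (i.+1)%:R^-1.
  rewrite /probX card_Xstat_eq ?i_gt0 // natrB ?subset_leq_card ?cycle_below_subset //.
  by rewrite mulrBl !ncycle_below_ratio ?i_gt0 ?(ltnW lt_in).
split=> //; rewrite probX_i; field.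
by rewrite nat1r !pnatr_eq0 /= -lt0n.
Qed.
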